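(* Let $M_m$ be a rotationally symmetric plane and $q\neq o$. If the geodesic $\gamma_q$ is escaping, then $m(r)>m(r_q)$ for all $r>r_q$, and $m'(r_q)>0$.
   Context: For a smooth function $m\colon[0,\infty)\to[0,\infty)$ with $m(0)=0$, $m'(0)=1$, $m>0$ on $(0,\infty)$ and smooth odd extension, $M_m$ is $\mathbb R^2$ with metric $dr^2+m(r)^2d\theta^2$ (polar coordinates $(r,\theta)$ about origin $o$). For $q\ne o$, $r_q$ is its $r$-coordinate and $\gamma_q\colon[0,\infty)\to M_m$ is the unit speed geodesic starting at $q$ in direction $\partial_\theta$. A geodesic is escaping if its image is unbounded. *)

From Stdlib Require Import Reals.
From Coquelicot Require Import Coquelicot.
Open Scope R_scope.

Definition smooth (f : R -> R) : Prop := forall (n : nat) (x : R), ex_derive_n f n x.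

(* The warping function m of the rotationally symmetric plane M_m, given
   through its smooth odd extension to R:  m smooth, odd, m(0)=0, m'(0)=1,
   m > 0 on (0, oo). *)
Definition warping (m : R -> R) : Prop :=
  smooth m /\ (forall x, m (- x) = - m x) /\ m 0 = 0 /\ Derive m 0 = 1 /\
  (forall x, 0 < x -> 0 < m x).

(* A curve t |-> (r t, th t) in polar coordinates (r > 0, th a continuous lift
   of the angle) is a geodesic of  dr^2 + m(r)^2 dth^2  iff it satisfies the
   geodesic equations (Christoffel symbols of the warped metric):
     r''  =  m(r) m'(r) th'^2
     th'' = -2 (m'(r)/m(r)) r' th'                                          *)
Definition polar_geodesic (m : R -> R) (r th : R -> R) : Prop :=
  forall t : R,
    0 < r t /\
    ex_derive r t /\ ex_derive (Derive r) t /\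
    ex_derive th t /\ ex_derive (Derive th) t /\
    Derive (Derive r) t = m (r t) * Derive m (r t) * (Derive th t) ^ 2 /\
    Derive (Derive th) t = - 2 * (Derive m (r t) / m (r t)) * Derive r t * Derive th t.

(* gamma_q for q with polar coordinates (rq, thq), rq > 0: the unit speed
   geodesic starting at q with initial velocity  d_theta / |d_theta| =
   (1/m(rq)) d_theta, i.e. r(0)=rq, r'(0)=0, th(0)=thq, th'(0)=1/m(rq). *)
Definition is_gamma_q (m : R -> R) (rq thq : R) (r th : R -> R) : Prop :=
  polar_geodesic m r th /\
  r 0 = rq /\ Derive r 0 = 0 /\ th 0 = thq /\ Derive th 0 = / m rq.

(* gamma_q : [0,oo) -> M_m is escaping iff its image is unbounded; since r is
   the distance to o, this means r is unbounded on [0,oo). *)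
Definition escaping (r : R -> R) : Prop :=
  forall B : R, exists t : R, 0 <= t /\ B < r t.

From Stdlib Require Import Reals Lra.
From Coquelicot Require Import Coquelicot.
Open Scope R_scope.

(* Along gamma_q, Clairaut's relation m(r)^2 th' = m(rq) and unit speed give
   r'^2 m(r)^2 + m(rq)^2 = m(r)^2, so m(r) >= m(rq) on the whole geodesic, and
   an escaping geodesic passes through every radius >= rq; hence m >= m(rq) on
   [rq, oo).  If m(s) = m(rq) for some s >= rq, then s is a critical point of m
   and r'^2 <= C (r - s)^2 near the circle r = s, so Gronwall's inequality for
   (r - s)^2 traps the geodesic on that circle, contradicting escape.  This
   rules out equality for s > rq and m'(rq) = 0, while m'(rq) < 0 would give
   m < m(rq) just beyond rq. *)

Lemma ex_derive_continuity_pt (f : R -> R) (x : R) :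
  ex_derive f x -> continuity_pt f x.
Proof.
  intros Hf. apply continuity_pt_filterlim. exact (ex_derive_continuous f x Hf).
Qed.

Lemma smooth_ex_derive (f : R -> R) :
  smooth f ->
  (forall x, ex_derive f x) /\ (forall x, ex_derive (Derive f) x) /\
  (forall x, ex_derive (Derive (Derive f)) x).
Proof.
  intros Hf. repeat split; intros x;
    [exact (Hf 1%nat x) | exact (Hf 2%nat x) | exact (Hf 3%nat x)].
Qed.

Lemma is_derive_zero_constant (f : R -> R) :
  (forall x, is_derive f x 0) -> forall x y, f x = f y.
Proof.
  intros Hf x y.
  destruct (MVT_gen f x y (fun _ => 0)) as [c [_ Hc]].
  - intros z _. apply Hf.
  - intros z _. apply ex_derive_continuity_pt. exists 0. apply Hf.
  - lra.
Qed.

Lemma is_derive_nonpos_le (f df : R -> R) (a b : R) :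
  a <= b -> (forall x, is_derive f x (df x)) ->
  (forall x, a <= x <= b -> df x <= 0) -> f b <= f a.
Proof.
  intros Hab Hf Hdf.
  destruct (MVT_gen f a b df) as [c [Hc Hfc]].
  - intros x _. apply Hf.
  - intros x _. apply ex_derive_continuity_pt. eexists. apply Hf.
  - rewrite Rmin_left, Rmax_right in Hc by lra.
    specialize (Hdf c Hc). nra.
Qed.

Lemma Derive_bound_lipschitz (f : R -> R) (M a b : R) :
  (forall x, ex_derive f x) ->
  (forall x, Rmin a b <= x <= Rmax a b -> Rabs (Derive f x) <= M) ->
  Rabs (f b - f a) <= M * Rabs (b - a).
Proof.
  intros Hf HM.
  destruct (MVT_gen f a b (Derive f)) as [c [Hc Hfc]].
  - intros x _. apply Derive_correct, Hf.
  - intros x _. apply ex_derive_continuity_pt, Hf.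
  - rewrite Hfc, Rabs_mult. apply Rmult_le_compat_r; [apply Rabs_pos | apply HM, Hc].
Qed.

Lemma continuous_abs_bounded (f : R -> R) (a b : R) :
  a <= b -> (forall x, a <= x <= b -> continuity_pt f x) ->
  exists M, forall x, a <= x <= b -> Rabs (f x) <= M.
Proof.
  intros Hab Hf.
  destruct (continuity_ab_maj (fun x => Rabs (f x)) a b Hab) as [xM [HxM _]].
  - intros x Hx. apply (continuity_pt_comp f Rabs), Rcontinuity_abs. apply Hf, Hx.
  - exists (Rabs (f xM)). exact HxM.
Qed.

Lemma critical_point_quadratic_bound (f : R -> R) (s lo hi : R) :
  (forall x, ex_derive f x) -> (forall x, ex_derive (Derive f) x) ->
  (forall x, ex_derive (Derive (Derive f)) x) ->
  lo <= s <= hi -> Derive f s = 0 ->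
  exists M, forall x, lo <= x <= hi -> Rabs (f x - f s) <= M * (x - s) ^ 2.
Proof.
  intros Hf1 Hf2 Hf3 Hs Hcrit.
  destruct (continuous_abs_bounded (Derive (Derive f)) lo hi) as [M HM].
  - lra.
  - intros x _. apply ex_derive_continuity_pt, Hf3.
  exists M. intros x Hx.
  assert (Hbetween : forall y, Rmin s x <= y <= Rmax s x ->
                       lo <= y <= hi /\ Rabs (y - s) <= Rabs (x - s)).
  { intros y. unfold Rmin, Rmax.
    destruct (Rle_dec s x); intros Hy; split; try lra; split_Rabs; lra. }
  replace (M * (x - s) ^ 2) with (M * Rabs (x - s) * Rabs (x - s))
    by (rewrite Rmult_assoc, <- Rabs_mult, Rabs_right; [ring | apply Rle_ge, Rle_0_sqr]).
  apply Derive_bound_lipschitz; [exact Hf1|].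
  intros y Hy. destruct (Hbetween y Hy) as [Hyi Hys].
  replace (Derive f y) with (Derive f y - Derive f s) by (rewrite Hcrit; ring).
  apply Rle_trans with (M * Rabs (y - s)).
  - apply Derive_bound_lipschitz; [exact Hf2|].
    intros z Hz. apply HM.
    revert Hy Hz. unfold Rmin, Rmax. destruct (Rle_dec s x), (Rle_dec s y); lra.
  - apply Rmult_le_compat_l; [|exact Hys].
    apply Rle_trans with (Rabs (Derive (Derive f) s)); [apply Rabs_pos | apply HM, Hs].
Qed.

Lemma Derive_interior_minimum (f : R -> R) (a b c : R) :
  ex_derive f c -> a < c < b -> (forall x, a < x < b -> f c <= f x) -> Derive f c = 0.
Proof.
  intros Hf Hc Hmin.
  rewrite <- (Derive_Reals f c (ex_derive_Reals_0 f c Hf)).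
  apply (deriv_minimum f a b c); [lra | lra | intros x Hax Hxb; apply Hmin; lra].
Qed.

Lemma Derive_nonneg_at_right_minimum (f : R -> R) (x b : R) :
  ex_derive f x -> x < b -> (forall y, x < y < b -> f x <= f y) -> 0 <= Derive f x.
Proof.
  intros Hf Hxb Hmin.
  destruct (Rle_or_lt 0 (Derive f x)) as [Hpos | Hneg]; [exact Hpos | exfalso].
  pose proof (proj1 (is_derive_Reals f x _) (Derive_correct f x Hf)) as Hlim.
  destruct (Hlim (- Derive f x)) as [delta Hdelta]; [lra|].
  set (h := Rmin (delta / 2) ((b - x) / 2)).
  assert (Hh : 0 < h /\ h < delta /\ h < b - x).
  { pose proof (cond_pos delta). unfold h, Rmin. destruct Rle_dec; lra. }
  specialize (Hdelta h ltac:(lra) ltac:(rewrite Rabs_right; lra)).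
  assert (0 <= (f (x + h) - f x) / h).
  { apply Rdiv_le_0_compat; [|lra]. specialize (Hmin (x + h) ltac:(lra)). lra. }
  rewrite Rabs_right in Hdelta by lra. lra.
Qed.

Lemma gronwall_forward_vanish (v dv : R -> R) (K a b : R) :
  a <= b -> (forall u, is_derive v u (dv u)) ->
  (forall u, a <= u <= b -> dv u <= K * v u) -> (forall u, 0 <= v u) ->
  v a = 0 -> v b = 0.
Proof.
  intros Hab Hv Hdv Hnonneg Ha.
  assert (Hdecr : v b * exp (- K * b) <= v a * exp (- K * a)).
  { apply (is_derive_nonpos_le (fun u => v u * exp (- K * u))
             (fun u => (dv u - K * v u) * exp (- K * u))); [exact Hab| |].
    - intros u.
      replace ((dv u - K * v u) * exp (- K * u))
        with (dv u * exp (- K * u) + v u * (- K * exp (- K * u))) by ring.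
      apply (is_derive_mult v (fun u => exp (- K * u))); [apply Hv| |intros; apply Rmult_comm].
      auto_derive; [exact I | ring].
    - intros u Hu. pose proof (exp_pos (- K * u)). specialize (Hdv u Hu). nra. }
  rewrite Ha, Rmult_0_l in Hdecr.
  pose proof (exp_pos (- K * b)). pose proof (Hnonneg b). nra.
Qed.

Lemma gronwall_vanish (v dv : R -> R) (K a b t0 : R) :
  a <= t0 <= b -> (forall u, is_derive v u (dv u)) ->
  (forall u, a <= u <= b -> Rabs (dv u) <= K * v u) -> (forall u, 0 <= v u) ->
  v t0 = 0 -> v a = 0 /\ v b = 0.
Proof.
  intros Ht0 Hv Hdv Hnonneg H0. split.
  - rewrite <- (Ropp_involutive a).
    apply (gronwall_forward_vanish (fun u => v (- u)) (fun u => - dv (- u)) K (- t0));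
      [lra | | | intros u; apply Hnonneg | now rewrite Ropp_involutive].
    + intros u. replace (- dv (- u)) with (-1 * dv (- u)) by ring.
      apply (is_derive_comp v Ropp); [apply Hv |].
      auto_derive; [exact I | ring].
    + intros u Hu. specialize (Hdv (- u) ltac:(lra)).
      pose proof (Rle_abs (- dv (- u))). rewrite Rabs_Ropp in *. lra.
  - apply (gronwall_forward_vanish v dv K t0); [lra | exact Hv | | exact Hnonneg | exact H0].
    intros u Hu. pose proof (Rle_abs (dv u)). specialize (Hdv u ltac:(lra)). lra.
Qed.

Section PolarGeodesic.

Variables m r th : R -> R.
Hypothesis m_derivable : forall x, ex_derive m x.
Hypothesis m_pos : forall x, 0 < x -> 0 < m x.
Hypothesis geodesic : polar_geodesic m r th.

Lemma polar_geodesic_clairaut (t u : R) :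
  m (r t) ^ 2 * Derive th t = m (r u) ^ 2 * Derive th u.
Proof.
  apply (is_derive_zero_constant (fun t => m (r t) ^ 2 * Derive th t)). intros x.
  destruct (geodesic x) as (Hr & Hr1 & _ & Hth1 & Hth2 & _ & Eth).
  assert (m (r x) <> 0) by (apply Rgt_not_eq, m_pos, Hr).
  auto_derive; [repeat split; auto|].
  (* [auto_derive] eta-expands the unknown functions; fold them back. *)
  change (fun y => Derive th y) with (Derive th).
  change (fun y => r y) with r. change (fun y => m y) with m.
  rewrite Eth. field. assumption.
Qed.

Lemma polar_geodesic_energy (t u : R) :
  Derive r t ^ 2 + m (r t) ^ 2 * Derive th t ^ 2 =
  Derive r u ^ 2 + m (r u) ^ 2 * Derive th u ^ 2.
Proof.
  apply (is_derive_zero_constant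
           (fun t => Derive r t ^ 2 + m (r t) ^ 2 * Derive th t ^ 2)). intros x.
  destruct (geodesic x) as (Hr & Hr1 & Hr2 & Hth1 & Hth2 & Er & Eth).
  assert (m (r x) <> 0) by (apply Rgt_not_eq, m_pos, Hr).
  auto_derive; [repeat split; auto|].
  change (fun y => Derive th y) with (Derive th).
  change (fun y => Derive r y) with (Derive r).
  change (fun y => r y) with r. change (fun y => m y) with m.
  rewrite Er, Eth. field. assumption.
Qed.

End PolarGeodesic.

Lemma radial_speed_bound (c M D : R) :
  0 < c -> 0 < M -> D ^ 2 * M ^ 2 + c ^ 2 = M ^ 2 ->
  c <= M /\ D ^ 2 <= 2 / c * (M - c).
Proof.
  intros Hc HM Henergy.
  assert (0 <= D ^ 2 * M ^ 2) by (apply Rmult_le_pos; apply pow2_ge_0).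
  assert (HcM : c <= M) by (apply Rsqr_incr_0_var; unfold Rsqr; nra).
  split; [exact HcM|].
  apply Rmult_le_reg_r with (M ^ 2 * c); [apply Rmult_lt_0_compat; [apply pow_lt|]; lra|].
  replace (2 / c * (M - c) * (M ^ 2 * c)) with (2 * (M - c) * M ^ 2) by (field; lra).
  replace (D ^ 2 * (M ^ 2 * c)) with ((M ^ 2 - c ^ 2) * c)
    by (replace (M ^ 2 - c ^ 2) with (D ^ 2 * M ^ 2) by lra; ring).
  assert (0 <= (M - c) * ((M - c) * (2 * M + c)))
    by (apply Rmult_le_pos; [|apply Rmult_le_pos]; lra).
  lra.
Qed.

Lemma escaping_attains (r : R -> R) (x : R) :
  continuity r -> escaping r -> r 0 <= x -> exists t, r t = x.
Proof.
  intros Hr Hesc Hx.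
  destruct (Hesc x) as [t [Ht Hxt]].
  destruct (IVT_gen r 0 t x Hr) as [t1 [_ Ht1]].
  - unfold Rmin, Rmax. destruct Rle_dec; lra.
  - exists t1. exact Ht1.
Qed.

Section GammaQ.

Variables (m : R -> R) (rq thq : R) (r th : R -> R).
Hypothesis warp : warping m.
Hypothesis rq_pos : 0 < rq.
Hypothesis gamma : is_gamma_q m rq thq r th.

Let m_derivable : forall x, ex_derive m x.
Proof. destruct warp as [Hsmooth _]. apply (smooth_ex_derive m Hsmooth). Qed.

Let m_pos : forall x, 0 < x -> 0 < m x.
Proof. destruct warp as (_ & _ & _ & _ & Hpos). exact Hpos. Qed.

Let r_derivable : forall t, ex_derive r t.
Proof. intros t. apply (proj1 gamma t). Qed.

Lemma gamma_q_energy (u : R) :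
  Derive r u ^ 2 * m (r u) ^ 2 + m rq ^ 2 = m (r u) ^ 2.
Proof.
  destruct gamma as (Hgeo & E0 & Er0 & _ & Eth0).
  pose proof (polar_geodesic_clairaut m r th m_derivable m_pos Hgeo u 0) as Hclairaut.
  pose proof (polar_geodesic_energy m r th m_derivable m_pos Hgeo u 0) as Henergy.
  rewrite E0, Er0, Eth0 in *.
  assert (Hc : 0 < m rq) by (apply m_pos, rq_pos).
  assert (HM : 0 < m (r u)) by (apply m_pos, (Hgeo u)).
  assert (HM2 : m (r u) ^ 2 <> 0) by (apply pow_nonzero; lra).
  assert (Hth : Derive th u = m rq / m (r u) ^ 2)
    by (apply (Rmult_eq_reg_l (m (r u) ^ 2)); [rewrite Hclairaut; field; lra | exact HM2]).
  rewrite Hth in Henergy.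
  apply (Rmult_eq_reg_r (/ m (r u) ^ 2)); [|apply Rinv_neq_0_compat, HM2].
  transitivity (Derive r u ^ 2 + m (r u) ^ 2 * (m rq / m (r u) ^ 2) ^ 2);
    [field; lra | rewrite Henergy; field; lra].
Qed.

Lemma gamma_q_warping_bounds (u : R) :
  m rq <= m (r u) /\ Derive r u ^ 2 <= 2 / m rq * (m (r u) - m rq).
Proof.
  apply radial_speed_bound; [apply m_pos, rq_pos | apply m_pos, (proj1 gamma u) |].
  apply gamma_q_energy.
Qed.

Lemma gamma_q_constant_radius (s t1 : R) :
  m s = m rq -> Derive m s = 0 -> r t1 = s -> forall t, r t = s.
Proof.
  intros Hms Hcrit Ht1.
  destruct warp as [Hsmooth _].
  destruct (smooth_ex_derive m Hsmooth) as (Hm1 & Hm2 & Hm3).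
  assert (Hends : forall a b, a <= t1 <= b -> r a = s /\ r b = s).
  { intros a b Hab.
    destruct (continuous_abs_bounded r a b) as [B HB];
      [lra | intros u _; apply ex_derive_continuity_pt, r_derivable |].
    assert (Hs : - B <= s <= B) by (specialize (HB t1 Hab); rewrite Ht1 in HB; split_Rabs; lra).
    destruct (critical_point_quadratic_bound m s (- B) B Hm1 Hm2 Hm3 Hs Hcrit) as [Mq HMq].
    assert (Hspeed : forall u, a <= u <= b ->
                       Derive r u ^ 2 <= 2 / m rq * Mq * (r u - s) ^ 2).
    { intros u Hu.
      destruct (gamma_q_warping_bounds u) as [_ Hbound].
      assert (Hru : - B <= r u <= B) by (specialize (HB u Hu); split_Rabs; lra).
      specialize (HMq (r u) Hru). rewrite Hms in HMq.
      assert (0 < 2 / m rq) by (apply Rdiv_lt_0_compat; [lra | apply m_pos, rq_pos]).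
      pose proof (Rle_abs (m (r u) - m rq)).
      rewrite Rmult_assoc. apply Rle_trans with (1 := Hbound).
      apply Rmult_le_compat_l; lra. }
    assert (Hv : forall u, is_derive (fun u => (r u - s) ^ 2) u (2 * (r u - s) * Derive r u)).
    { intros u. auto_derive; [apply r_derivable |].
      change (fun y => r y) with r. ring. }
    assert (Hgronwall : forall u, a <= u <= b ->
              Rabs (2 * (r u - s) * Derive r u) <= (1 + 2 / m rq * Mq) * (r u - s) ^ 2).
    { intros u Hu. specialize (Hspeed u Hu).
      pose proof (pow2_ge_0 (r u - s - Derive r u)).
      pose proof (pow2_ge_0 (r u - s + Derive r u)).
      apply Rabs_le. split; lra. }
    assert (Hsq0 : forall x, x ^ 2 = 0 -> x = 0).
    { intros x Hx. destruct (Req_dec x 0) as [|Hneq]; [assumption|].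
      exfalso. exact (pow_nonzero x 2 Hneq Hx). }
    destruct (gronwall_vanish (fun u => (r u - s) ^ 2) _ _ a b t1 Hab Hv Hgronwall)
      as [Ha Hb]; [intros u; apply pow2_ge_0 | rewrite Ht1; ring |].
    split; [apply Rminus_diag_uniq, Hsq0, Ha | apply Rminus_diag_uniq, Hsq0, Hb]. }
  intros t. destruct (Rle_or_lt t t1).
  - apply (Hends t t1). lra.
  - apply (Hends t1 t). lra.
Qed.

End GammaQ.

Theorem lemma3p2 (m : R -> R) (rq thq : R) (r th : R -> R) :
  warping m -> 0 < rq ->
  is_gamma_q m rq thq r th ->
  escaping r ->
  (forall s : R, rq < s -> m rq < m s) /\ 0 < Derive m rq.
Proof.
  intros Hw Hrq Hgq Hesc.
  destruct (smooth_ex_derive m (proj1 Hw)) as [Hm _].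
  assert (Hreach : forall x, rq <= x -> exists t, r t = x).
  { intros x Hx. apply escaping_attains; [| exact Hesc | now rewrite (proj1 (proj2 Hgq))].
    intros t. apply ex_derive_continuity_pt, (proj1 Hgq t). }
  assert (Hge : forall x, rq <= x -> m rq <= m x).
  { intros x Hx. destruct (Hreach x Hx) as [t Ht]. rewrite <- Ht.
    apply (gamma_q_warping_bounds m rq thq r th Hw Hrq Hgq t). }
  assert (Hnot_critical : forall s, rq <= s -> m s = m rq -> Derive m s <> 0).
  { intros s Hs Hms Hcrit. destruct (Hreach s Hs) as [t1 Ht1].
    destruct (Hesc s) as [t [_ Ht]].
    rewrite (gamma_q_constant_radius m rq thq r th Hw Hrq Hgq s t1 Hms Hcrit Ht1 t) in Ht. lra. }
  assert (Hgt : forall s, rq < s -> m rq < m s).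
  { intros s Hs. destruct (Rle_lt_or_eq_dec _ _ (Hge s ltac:(lra))) as [Hlt | Heq]; [exact Hlt|].
    exfalso. apply (Hnot_critical s); [lra | now symmetry |].
    apply (Derive_interior_minimum m rq (s + 1) s (Hm s)); [lra |].
    intros x Hx. rewrite <- Heq. apply Hge. lra. }
  split; [exact Hgt|].
  destruct (Rle_lt_or_eq_dec 0 (Derive m rq)) as [Hpos | Hzero]; [| exact Hpos |].
  - apply (Derive_nonneg_at_right_minimum m rq (rq + 1) (Hm rq)); [lra |].
    intros y Hy. apply Rlt_le, Hgt. lra.
  - exfalso. exact (Hnot_critical rq (Rle_refl rq) eq_refl (eq_sym Hzero)).
Qed.
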